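(* Let $n\in\mathbb N$ and let $S$ be a well ordered subsemigroup of the nonnegative part of $\mathbb R^n$ with the lexicographic order. Suppose that $S$ has ordinal type $\le\omega^h$ for some $h\in\mathbb N$. Then $S$ has ordinal type $\le\omega^n$.
   Context: $\omega$ denotes the ordinal type of $\mathbb N$. The lexicographic order on $\mathbb R^n$ compares first coordinates first. *)

From Stdlib Require Import Reals.
Open Scope R_scope.

(* A vector of R^n is represented as a function nat -> R whose coordinates
   with index >= n vanish. *)
Definition in_Rn (n : nat) (x : nat -> R) : Prop :=
  forall i, (n <= i)%nat -> x i = 0.

Definition vzero : nat -> R := fun _ => 0.
Definition vadd (x y : nat -> R) : nat -> R := fun i => x i + y i.

Definition lex_lt {A : Type} (lt : A -> A -> Prop) (n : nat)
  (x y : nat -> A) : Prop :=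
  exists k, (k < n)%nat /\ (forall i, (i < k)%nat -> x i = y i) /\ lt (x k) (y k).

Definition lex_nonneg (n : nat) (x : nat -> R) : Prop :=
  (forall i, x i = 0) \/ lex_lt Rlt n vzero x.

Definition lex_nonneg_subsemigroup (n : nat) (S : (nat -> R) -> Prop) : Prop :=
  (forall x, S x -> in_Rn n x /\ lex_nonneg n x) /\
  (forall x y, S x -> S y -> S (vadd x y)).

Definition lex_well_ordered (n : nat) (S : (nat -> R) -> Prop) : Prop :=
  forall T : (nat -> R) -> Prop,
    (forall x, T x -> S x) -> (exists x, T x) ->
    exists m, T m /\ forall x, T x -> ~ lex_lt Rlt n x m.

(* The ordinal omega^h is realised as N^h with the lexicographic order
   (first coordinate most significant).  A well ordered set has ordinal type
   <= omega^h iff it admits a strictly order-preserving map into omega^h. *)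
Definition ord_type_le_omega_pow (n : nat) (S : (nat -> R) -> Prop) (h : nat)
  : Prop :=
  exists f : (nat -> R) -> (nat -> nat),
    forall x y, S x -> S y -> lex_lt Rlt n x y -> lex_lt lt h (f x) (f y).

(* For x in S and k < n, consider the elements y of S that agree with x
   before k and satisfy y_k < x_k.  Their k-th coordinates form a finite
   set, and its size r_k(x) makes x |-> (r_0(x), ..., r_(n-1)(x)) an order
   embedding of S into N^n, i.e. into omega^n.

   Finiteness: otherwise these values, being well ordered, contain an
   increasing sequence, with a subsequence a_0 < a_1 < ... converging to its
   limit L so fast that L - a_(j+1) < (L - a_j) / (h+1).  For a
   nondecreasing index tuple i_0 <= ... <= i_h the sum of the chosen
   elements with k-th coordinates a_(i_0), ..., a_(i_h) lies in S, the
   coordinates before k do not depend on the tuple, and the fast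
   convergence makes the k-th coordinate increase lexicographically in the
   tuple.  Such tuples have order type omega^(h+1), so omega^(h+1) would
   embed into S and hence into omega^h, which is impossible. *)

From Stdlib Require Import Reals Lra Lia List.
From Stdlib Require Import Classical ClassicalEpsilon FunctionalExtensionality PropExtensionality.
Open Scope nat_scope.

Definition least (P : nat -> Prop) : nat :=
  epsilon (inhabits 0) (fun N => P N /\ forall M, P M -> N <= M).

Lemma least_exists (P : nat -> Prop) (N0 : nat) :
  P N0 -> exists N, P N /\ forall M, P M -> N <= M.
Proof.
  induction N0 as [N0 IH] using (well_founded_induction Wf_nat.lt_wf); intro HP.
  destruct (classic (exists M, M < N0 /\ P M)) as [[M [HM PM]] | Hnone].
  - exact (IH M HM PM).
  - exists N0; split; [exact HP |].
    intros M PM; apply Nat.nlt_ge; intro HM; apply Hnone; eauto.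
Qed.

Lemma least_spec (P : nat -> Prop) (N0 : nat) :
  P N0 -> P (least P) /\ forall M, P M -> least P <= M.
Proof. intro HP; exact (epsilon_spec _ _ (least_exists P N0 HP)). Qed.

Lemma nat_fun_attains_min (g : nat -> nat) : exists J, forall j, g J <= g j.
Proof.
  destruct (least_exists (fun N => exists j, g j = N) (g 0)) as [N [[J HJ] Hmin]];
    [eauto |].
  exists J; intro j; rewrite HJ; apply Hmin; eauto.
Qed.

Lemma bounded_monotone_eventually_constant (s : nat -> nat) (c : nat) :
  (forall j, s j <= s (S j)) -> (forall j, s j <= c) ->
  exists J, forall j, J <= j -> s j = s J.
Proof.
  intros Hs Hc.
  assert (Hmono : forall i j, i <= j -> s i <= s j).
  { intros i j Hij; induction Hij as [| j Hij IH]; [lia | specialize (Hs j); lia]. }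
  destruct (nat_fun_attains_min (fun j => c - s j)) as [J HJ].
  exists J; intros j Hj.
  specialize (HJ j); specialize (Hmono _ _ Hj); specialize (Hc j); simpl in HJ; lia.
Qed.

(** * Lexicographic embeddings between powers of omega *)

Definition ncons (a : nat) (v : nat -> nat) : nat -> nat :=
  fun i => match i with O => a | S i' => v i' end.

Lemma lex_lt_head_le (m : nat) (p q : nat -> nat) :
  lex_lt lt m p q -> p 0 <= q 0.
Proof.
  intros [[| k] [_ [Hagree Hlt]]]; [lia |].
  rewrite (Hagree 0); lia.
Qed.

Lemma lex_lt_at_0 (m : nat) (p q : nat -> nat) :
  0 < m -> p 0 < q 0 -> lex_lt lt m p q.
Proof. intros Hm Hlt; exists 0; repeat split; auto; intros; lia. Qed.

Lemma lex_lt_at_1 (m : nat) (p q : nat -> nat) :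
  1 < m -> p 0 = q 0 -> p 1 < q 1 -> lex_lt lt m p q.
Proof.
  intros Hm H0 H1; exists 1; repeat split; auto.
  intros i Hi; replace i with 0 by lia; exact H0.
Qed.

Lemma lex_lt_cons (m a : nat) (v w : nat -> nat) :
  lex_lt lt m v w -> lex_lt lt (S m) (ncons a v) (ncons a w).
Proof.
  intros [k [Hk [Hagree Hlt]]]; exists (S k); repeat split; [lia | | exact Hlt].
  intros [| i] Hi; [reflexivity | apply Hagree; lia].
Qed.

Lemma lex_lt_tail (m : nat) (p q : nat -> nat) :
  p 0 = q 0 -> lex_lt lt (S m) p q ->
  lex_lt lt m (fun i => p (S i)) (fun i => q (S i)).
Proof.
  intros H0 [[| k] [Hk [Hagree Hlt]]]; [lia |].
  exists k; repeat split; [lia | | exact Hlt].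
  intros i Hi; apply Hagree; lia.
Qed.

Lemma lex_lt_shift (m c : nat) (v w : nat -> nat) :
  lex_lt lt m v w -> lex_lt lt m (fun i => v i + c) (fun i => w i + c).
Proof.
  intros [k [Hk [Hagree Hlt]]]; exists k; repeat split; [exact Hk | | lia].
  intros i Hi; rewrite Hagree; auto.
Qed.

(* On the block 0 :: j :: _ the first coordinate of F is eventually constant
   in j; shifting N^(m+1) into that block and dropping this coordinate
   yields an embedding N^(m+1) -> N^m, so induction applies. *)
Lemma no_lex_embedding_succ (m : nat) (F : (nat -> nat) -> nat -> nat) :
  ~ (forall v w, lex_lt lt (S m) v w -> lex_lt lt m (F v) (F w)).
Proof.
  revert F; induction m as [| m IH]; intros F HF.
  - destruct (HF (fun _ => 0) (fun _ => 1)) as [k [Hk _]];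
      [apply lex_lt_at_0; lia | lia].
  - set (z := fun _ : nat => 0).
    set (s := fun j => F (ncons 0 (ncons j z)) 0).
    assert (Hs_mono : forall j, s j <= s (S j)).
    { intro j; apply (lex_lt_head_le (S m)), HF, lex_lt_at_1; simpl; lia. }
    assert (Hs_bound : forall j, s j <= F (ncons 1 z) 0).
    { intro j; apply (lex_lt_head_le (S m)), HF, lex_lt_at_0; simpl; lia. }
    destruct (bounded_monotone_eventually_constant s _ Hs_mono Hs_bound) as [J HJ].
    set (P := fun v : nat -> nat => ncons 0 (fun i => v i + S J)).
    assert (HP : forall v, F (P v) 0 = s J).
    { intro v.
      assert (Hlo : s (v 0 + J) <= F (P v) 0).
      { apply (lex_lt_head_le (S m)), HF, lex_lt_at_1; simpl; lia. }
      assert (Hhi : F (P v) 0 <= s (v 0 + S (S J))).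
      { apply (lex_lt_head_le (S m)), HF, lex_lt_at_1; simpl; lia. }
      rewrite HJ in Hlo, Hhi by lia; lia. }
    apply (IH (fun v i => F (P v) (S i))); intros v w Hvw.
    apply lex_lt_tail; [now rewrite !HP |].
    apply HF, lex_lt_cons, lex_lt_shift, Hvw.
Qed.

(** * Sums along fast decaying weights *)

Open Scope R_scope.

Fixpoint prefix_sum (v : nat -> nat) (j : nat) : nat :=
  match j with O => v O | S j' => (prefix_sum v j' + v (S j'))%nat end.

Lemma prefix_sum_mono (v : nat -> nat) (i j : nat) :
  (i <= j)%nat -> (prefix_sum v i <= prefix_sum v j)%nat.
Proof. intro Hij; induction Hij; simpl; lia. Qed.

Lemma sum_f_R0_const_except (A B : R) (k0 m : nat) : (k0 <= m)%nat ->
  sum_f_R0 (fun j => if Nat.eqb j k0 then A - B else A) m = INR (S m) * A - B.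
Proof.
  induction m as [| m IH]; intro Hk.
  - replace k0 with 0%nat by lia; simpl; lra.
  - rewrite tech5, (S_INR (S m)).
    destruct (Nat.eq_dec k0 (S m)) as [-> | Hne].
    + rewrite Nat.eqb_refl, (sum_eq _ (fun _ => A)), sum_cte; [ring |].
      intros i Hi; destruct (Nat.eqb_spec i (S m)); [lia | reflexivity].
    + rewrite IH by lia; destruct (Nat.eqb_spec (S m) k0); [lia | ring].
Qed.

Lemma sum_f_R0_sub_const (L : R) (a : nat -> R) (m : nat) :
  sum_f_R0 (fun j => L - a j) m = INR (S m) * L - sum_f_R0 a m.
Proof.
  induction m as [| m IH]; simpl sum_f_R0; [simpl; ring |].
  rewrite IH, (S_INR (S m)); ring.
Qed.

(* At the first index k0 where the tuples differ, the term D a of the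
   smaller tuple already outweighs the m+1 terms <= D (a+1) of the larger
   one from k0 on. *)
Lemma fast_decay_sum_lex_antitone (m : nat) (D : nat -> R) :
  (forall j, 0 < D j) -> (forall j, D (S j) * INR (S m) < D j) ->
  forall v w, lex_lt lt (S m) v w ->
  sum_f_R0 (fun j => D (prefix_sum w j)) m < sum_f_R0 (fun j => D (prefix_sum v j)) m.
Proof.
  intros Hpos Hdecay v w [k0 [Hk [Hagree Hlt]]].
  assert (Hanti : forall i j, (i <= j)%nat -> D j <= D i).
  { assert (Hm : 1 <= INR (S m)) by (apply (le_INR 1); lia).
    intros i j Hij; induction Hij as [| j Hij IH]; [lra |].
    specialize (Hdecay j); specialize (Hpos (S j)); nra. }
  assert (Hprefix : forall j, (j < k0)%nat -> prefix_sum v j = prefix_sum w j).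
  { induction j as [| j IH]; intro Hj; simpl; rewrite ?IH, Hagree by lia; reflexivity. }
  set (a := prefix_sum v k0).
  assert (Ha : (a + 1 <= prefix_sum w k0)%nat).
  { unfold a; destruct k0 as [| k0]; simpl; [| rewrite Hprefix by lia]; lia. }
  assert (Hterm : forall j, (j <= m)%nat ->
    D (prefix_sum w j) - D (prefix_sum v j)
    <= (if Nat.eqb j k0 then D (a + 1)%nat - D a else D (a + 1)%nat)).
  { intros j Hj; destruct (Nat.eqb_spec j k0) as [-> | Hne].
    - fold a; pose proof (Hanti _ _ Ha); lra.
    - destruct (Nat.lt_ge_cases j k0).
      + rewrite Hprefix by lia; pose proof (Hpos (a + 1)%nat); lra.
      + pose proof (prefix_sum_mono w k0 j ltac:(lia)).
        pose proof (Hanti (a + 1)%nat (prefix_sum w j) ltac:(lia)).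
        pose proof (Hpos (prefix_sum v j)); lra. }
  pose proof (sum_Rle _ _ m Hterm) as Hsum.
  rewrite minus_sum, sum_f_R0_const_except in Hsum by lia.
  specialize (Hdecay a); rewrite Nat.add_1_r in Hsum; lra.
Qed.

(** * Increasing sequences of reals *)

Lemma increasing_seq_of_infinite (V : R -> Prop) :
  (forall W : R -> Prop, (forall r, W r -> V r) -> (exists r, W r) ->
     exists r, W r /\ forall r', W r' -> r <= r') ->
  (forall l : list R, exists r, V r /\ ~ In r l) ->
  exists a : nat -> R, (forall j, V (a j)) /\ forall j, a j < a (S j).
Proof.
  intros Hmin Hinf.
  assert (Hnext : forall l : list R, exists r,
    (V r /\ ~ In r l) /\ forall r', V r' -> ~ In r' l -> r <= r').
  { intro l; destruct (Hmin (fun r => V r /\ ~ In r l)) as [r [Hr Hle]];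
      [tauto | apply Hinf |].
    exists r; split; [exact Hr | intros r' H1 H2; apply Hle; auto]. }
  destruct (choice _ Hnext) as [next Hspec].
  (* a_j is the least value outside the list of its predecessors *)
  set (pre := fun j => Nat.iter j (fun l => l ++ next l :: nil) nil).
  exists (fun j => next (pre j)); split; [intro j; apply Hspec |].
  intro j; change (pre (S j)) with (pre j ++ next (pre j) :: nil).
  destruct (Hspec (pre j ++ next (pre j) :: nil)) as [[HV Hnotin] _].
  rewrite in_app_iff in Hnotin; simpl in Hnotin.
  destruct (Hspec (pre j)) as [_ Hle].
  specialize (Hle _ HV ltac:(tauto)).
  destruct (Req_dec (next (pre j)) (next (pre j ++ next (pre j) :: nil))) as [Heq | Hne];
    [exfalso; tauto | lra].
Qed.

Lemma fast_subsequence (a : nat -> R) (B c : R) :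
  0 < c -> (forall j, a j < a (S j)) -> (forall j, a j <= B) ->
  exists (L : R) (sigma : nat -> nat),
    forall j, a (sigma j) < L /\ (L - a (sigma (S j))) * c < L - a (sigma j).
Proof.
  intros Hc Hinc Hbound.
  destruct (completeness (fun r => exists j, r = a j)) as [L [Hub Hlub]];
    [exists B; intros r [j ->]; apply Hbound | exists (a 0%nat), 0%nat; reflexivity |].
  assert (HaL : forall j, a j < L).
  { intro j; pose proof (Hinc j); pose proof (Hub (a (S j)) (ex_intro _ (S j) eq_refl)); lra. }
  assert (Hnext : forall i, exists j, L - a j < (L - a i) / c).
  { intro i; apply NNPP; intro Hnone.
    assert (Heps : 0 < (L - a i) / c) by (pose proof (HaL i); apply Rdiv_lt_0_compat; lra).
    assert (L <= L - (L - a i) / c); [| lra].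
    apply Hlub; intros r [j ->]; apply Rnot_lt_le; intro Hj; apply Hnone; exists j; lra. }
  destruct (choice _ Hnext) as [nx Hnx].
  exists L, (fun j => Nat.iter j nx 0%nat); intro j; split; [apply HaL |].
  simpl; specialize (Hnx (Nat.iter j nx 0%nat)).
  apply (Rmult_lt_compat_r c) in Hnx; [| exact Hc].
  unfold Rdiv in Hnx; rewrite Rmult_assoc, Rinv_l in Hnx; lra.
Qed.

(** * Ranks in a well ordered semigroup *)

Definition below_at (Sg : (nat -> R) -> Prop) (x : nat -> R) (k : nat)
  (y : nat -> R) : Prop :=
  Sg y /\ (forall i, (i < k)%nat -> y i = x i) /\ y k < x k.

Definition covered_below (Sg : (nat -> R) -> Prop) (x : nat -> R) (k N : nat) : Prop :=
  exists l : list R, length l = N /\ forall y, below_at Sg x k y -> In (y k) l.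

Definition rank (Sg : (nat -> R) -> Prop) (x : nat -> R) (k : nat) : nat :=
  least (covered_below Sg x k).

Fixpoint vsum (m : nat) (Z : nat -> nat -> R) : nat -> R :=
  match m with O => Z O | S m' => vadd (vsum m' Z) (Z (S m')) end.

Lemma vsum_coord (m : nat) (Z : nat -> nat -> R) (i : nat) :
  vsum m Z i = sum_f_R0 (fun j => Z j i) m.
Proof. induction m as [| m IH]; simpl; [reflexivity | unfold vadd; rewrite IH; reflexivity]. Qed.

Lemma vsum_closed (Sg : (nat -> R) -> Prop) (m : nat) (Z : nat -> nat -> R) :
  (forall x y, Sg x -> Sg y -> Sg (vadd x y)) -> (forall j, Sg (Z j)) -> Sg (vsum m Z).
Proof. intros Hadd HZ; induction m; simpl; auto. Qed.

Lemma below_values_have_min (n : nat) (Sg : (nat -> R) -> Prop) (x : nat -> R) (k : nat) :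
  lex_well_ordered n Sg -> (k < n)%nat ->
  forall W : R -> Prop, (forall r, W r -> exists y, below_at Sg x k y /\ y k = r) ->
  (exists r, W r) -> exists r, W r /\ forall r', W r' -> r <= r'.
Proof.
  intros Hwo Hk W HW [r0 Hr0].
  destruct (HW r0 Hr0) as [y0 [Hy0 Hy0k]].
  destruct (Hwo (fun y => below_at Sg x k y /\ W (y k))) as [m [[Hm HWm] Hmin]];
    [intros y [[Sy _] _]; exact Sy | exists y0; subst r0; auto |].
  exists (m k); split; [exact HWm |].
  intros r' Hr'; destruct (HW r' Hr') as [y [Hy <-]].
  apply Rnot_lt_le; intro Hlt; apply (Hmin y); [auto |].
  destruct Hy as [_ [Hy _]], Hm as [_ [Hm _]].
  exists k; repeat split; [exact Hk | | exact Hlt].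
  intros i Hi; rewrite Hy, Hm by exact Hi; reflexivity.
Qed.

Lemma below_at_covered (n : nat) (Sg : (nat -> R) -> Prop) (h : nat) (x : nat -> R) (k : nat) :
  (forall x y, Sg x -> Sg y -> Sg (vadd x y)) -> lex_well_ordered n Sg ->
  ord_type_le_omega_pow n Sg h -> (k < n)%nat ->
  exists N, covered_below Sg x k N.
Proof.
  intros Hadd Hwo [f Hf] Hk; apply NNPP; intro Hnot.
  assert (Hinf : forall l : list R, exists r,
    (exists y, below_at Sg x k y /\ y k = r) /\ ~ In r l).
  { intro l; apply NNPP; intro Hnone; apply Hnot.
    exists (length l), l; split; [reflexivity |].
    intros y Hy; apply NNPP; intro Hy'; apply Hnone; eauto. }
  destruct (increasing_seq_of_infinite _ (below_values_have_min n Sg x k Hwo Hk) Hinf)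
    as [a [Ha Hinc]].
  destruct (choice _ Ha) as [Y HY].
  destruct (fast_subsequence a (x k) (INR (S h))) as [L [sigma Hsigma]];
    [apply lt_0_INR; lia | exact Hinc |
     intro j; destruct (HY j) as [[_ [_ Hj]] <-]; lra |].
  set (g := fun v => vsum h (fun j => Y (sigma (prefix_sum v j)))).
  apply (no_lex_embedding_succ h (fun v => f (g v))); intros v w Hvw.
  apply Hf; [apply vsum_closed; auto; intro j; apply HY .. |].
  exists k; repeat split; [exact Hk | |].
  - intros i Hi; unfold g; rewrite !vsum_coord.
    transitivity (sum_f_R0 (fun _ => x i) h); [| symmetry];
      apply sum_eq; intros j _; apply HY, Hi.
  - set (D := fun j => L - a (sigma j)).
    assert (Hcoord : forall u, g u k = INR (S h) * L - sum_f_R0 (fun j => D (prefix_sum u j)) h).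
    { intro u; unfold g; rewrite vsum_coord, <- sum_f_R0_sub_const.
      apply sum_eq; intros j _; destruct (HY (sigma (prefix_sum u j))) as [_ ->].
      unfold D; ring. }
    rewrite !Hcoord.
    assert (HDpos : forall j, 0 < D j) by (intro j; pose proof (proj1 (Hsigma j)); unfold D; lra).
    pose proof (fast_decay_sum_lex_antitone h D HDpos (fun j => proj2 (Hsigma j)) v w Hvw).
    lra.
Qed.

Lemma rank_agree (Sg : (nat -> R) -> Prop) (x y : nat -> R) (i : nat) :
  (forall j, (j <= i)%nat -> x j = y j) -> rank Sg x i = rank Sg y i.
Proof.
  intro Hagree; unfold rank, covered_below.
  replace (below_at Sg x i) with (below_at Sg y i); [reflexivity |].
  apply functional_extensionality; intro z; apply propositional_extensionality.
  unfold below_at; split; intros [Sz [Hz Hzi]]; rewrite ?Hagree in * by lia;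
    repeat split; auto; intros j Hj; rewrite Hz, Hagree by lia; reflexivity.
Qed.

(* The cover of the values below y_k contains x_k; removing it leaves a
   cover of the values below x_k. *)
Lemma rank_lt_of_below_at (Sg : (nat -> R) -> Prop) (x y : nat -> R) (k : nat) :
  (exists N, covered_below Sg y k N) -> below_at Sg y k x -> (rank Sg x k < rank Sg y k)%nat.
Proof.
  intros [N HN] Hx.
  destruct (least_spec _ N HN) as [[l [Hlen Hcov]] _]; fold (rank Sg y k) in Hlen.
  set (l' := remove Req_dec_T (x k) l).
  assert (Hcov' : covered_below Sg x k (length l')).
  { exists l'; split; [reflexivity |].
    intros z [Sz [Hz Hzk]]; destruct Hx as [_ [Hx Hxk]].
    apply in_in_remove; [lra |]; apply Hcov; repeat split; [exact Sz | | lra].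
    intros i Hi; rewrite Hz, Hx by exact Hi; reflexivity. }
  pose proof (proj2 (least_spec _ _ Hcov') _ Hcov') as Hrank; fold (rank Sg x k) in Hrank.
  pose proof (remove_length_lt Req_dec_T l (x k) (Hcov x Hx)) as Hshorter; fold l' in Hshorter.
  lia.
Qed.

Theorem mainTheorem6 (n : nat) (S : (nat -> R) -> Prop) (h : nat) :
  lex_nonneg_subsemigroup n S ->
  lex_well_ordered n S ->
  ord_type_le_omega_pow n S h ->
  ord_type_le_omega_pow n S n.
Proof.
  intros [_ Hadd] Hwo Hord.
  exists (rank S); intros x y Sx Sy [k [Hk [Hagree Hlt]]].
  exists k; repeat split; [exact Hk | |].
  - intros i Hi; apply rank_agree; intros j Hj; apply Hagree; lia.
  - apply rank_lt_of_below_at; [exact (below_at_covered n S h y k Hadd Hwo Hord Hk) |].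
    repeat split; auto.
Qed.
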